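(* Let $\mathcal{N}$ be a Beeping Network with $n$ nodes and maximum degree $\Delta$, where each node has a unique ID from $[1,n^c]$ for a constant $c\ge1$ and each node knows $n$, $c$ and $\Delta$. There is a deterministic distributed algorithm (for the Beeping Network) that simulates any single round of any algorithm designed for the CONGEST model: if each node $u$ holds, for each neighbor $v\in N(u)$, a (possibly different) message $m_{u,v}$ of $O(\log n)$ bits, then after $O(\Delta^2\,\mathrm{polylog}\, n\,\log\Delta)$ beeping rounds, for every $u$ and every $v\in N(u)$, the node $v$ knows $m_{u,v}$ together with the ID of $u$. Here $\mathrm{polylog}\, n$ is a fixed polylogarithmic function of $n$.
   Context: A Beeping Network is a network of $n$ nodes whose topology is an undirected graph $G=(V,E)$; $N(v)$ is the neighbor set of $v$. Time is divided into synchronous rounds and all nodes start simultaneously. In each round every node either beeps or listens; a listening node hears ''silence'' if no neighbor beeps and ''noise'' if at least one neighbor beeps, and cannot distinguish one beep from several. The algorithm may be adaptive (decisions can depend on the silence/noise feedback heard so far). In the CONGEST model, in each round each node can send a possibly different message of $O(\log n)$ bits to each neighbor, and all such messages are received without collisions. *)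

From mathcomp Require Import all_boot all_order.
Set Implicit Arguments. Unset Strict Implicit. Unset Printing Implicit Defensive.

Definition lg (x : nat) : nat := (trunc_log 2 x).+1.

(* A node's local input: a partial map from IDs to messages (None = no message). *)
Definition msgmap := nat -> option nat.

(* A deterministic beeping protocol (for fixed known parameters n, c, Delta).
   In every round a node decides whether to beep, as a function of its own ID,
   its local input and the feedback history heard so far (adaptivity).
   At the end, it outputs a partial map ID -> message, computed from the same data. *)
Record beep_protocol := BeepProtocol {
  bp_act : nat -> msgmap -> seq bool -> bool;
  bp_out : nat -> msgmap -> seq bool -> msgmap }.

Section Exec.
Variables (n : nat) (adj : rel 'I_n) (id : 'I_n -> nat) (inp : 'I_n -> msgmap)
          (P : beep_protocol).

(* feedback histories after t rounds; a history entry is true iff the node listened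
   in that round and heard noise (at least one neighbour beeped); a beeping node
   records false (it hears nothing; its own beeps are recomputable from its history). *)
Fixpoint history (t : nat) : 'I_n -> seq bool :=
  match t with
  | 0 => fun _ => [::]
  | t'.+1 =>
      let h := history t' in
      let beeps v := bp_act P (id v) (inp v) (h v) in
      fun v => rcons (h v) (~~ beeps v && [exists u, adj v u && beeps u])
  end.

Definition output (t : nat) (v : 'I_n) : msgmap :=
  bp_out P (id v) (inp v) (history t v).
End Exec.

(* Input of node u: for each neighbour w, the message m u w, keyed by the ID of w. *)
Definition outbox n (adj : rel 'I_n) (id : 'I_n -> nat) (m : 'I_n -> 'I_n -> nat)
  (u : 'I_n) : msgmap :=
  fun x => if [pick w | adj u w && (id w == x)] is Some w then Some (m u w) else None.

(* What node v must learn: for each neighbour u, the pair (ID of u, m u v). *)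
Definition inbox n (adj : rel 'I_n) (id : 'I_n -> nat) (m : 'I_n -> 'I_n -> nat)
  (v : 'I_n) : msgmap :=
  fun x => if [pick u | adj v u && (id u == x)] is Some u then Some (m u v) else None.

Definition degree n (adj : rel 'I_n) (v : 'I_n) : nat := #|[pred u | adj v u]|.
Definition max_degree n (adj : rel 'I_n) : nat := \max_(v : 'I_n) degree adj v.

From mathcomp Require Import all_boot all_order all_algebra finfield.
From mathcomp Require Import zify ring.
Set Implicit Arguments. Unset Strict Implicit. Unset Printing Implicit Defensive.

(* Time is cut into q^2 blocks of 2W + B rounds, W = c lg n and B = b lg n, indexed by
   the points of F_q^2 for a field F_q with q > Delta W. A node with ID x is a sender in
   the blocks on the graph of the polynomial of degree < W whose coefficients are the bits
   of x; two such graphs meet in fewer than W points. Hence for every edge (v, u) at least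
   q - Delta (W - 1) > Delta blocks have u as the only sender among v and its neighbours;
   in them u "owns" v. In a block owned by u, the listeners of u that have not yet received
   their message from u run a bitwise maximum-ID tournament relayed by u (they beep their
   ID bits, u echoes the OR), so u learns the winner's ID and then beeps the message meant
   for it. A winner never contends with u again, so each such block serves a new neighbour
   of u; as u has fewer than Delta neighbours besides v, v is served among its Delta blocks.
   The schedule has q^2 (2W + B) = O(Delta^2 log^3 n) rounds. *)

(** * Binary expansions *)

Definition msbit (K x i : nat) : bool := odd (x %/ 2 ^ (K - i.+1)).

Fixpoint nat_of_bits (b : nat -> bool) (k : nat) : nat :=
  if k is k'.+1 then (nat_of_bits b k').*2 + b k' else 0.

Lemma nat_of_bitsS b k : nat_of_bits b k.+1 = (nat_of_bits b k).*2 + b k.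
Proof. by []. Qed.

Lemma eq_nat_of_bits (b1 b2 : nat -> bool) k :
  (forall i, i < k -> b1 i = b2 i) -> nat_of_bits b1 k = nat_of_bits b2 k.
Proof.
elim: k => //= k IH eq_b; rewrite eq_b // IH // => i lt_ik.
by rewrite eq_b // ltnW.
Qed.

Lemma nat_of_msbits_prefix K x i :
  x < 2 ^ K -> i <= K -> nat_of_bits (msbit K x) i = x %/ 2 ^ (K - i).
Proof.
move=> lt_x; elim: i => [_ | i IH lt_iK]; first by rewrite subn0 divn_small.
rewrite nat_of_bitsS (IH (ltnW lt_iK)) /msbit (_ : K - i = (K - i.+1).+1); last by lia.
by rewrite expnSr divnMA divn2 addnC odd_double_half.
Qed.

Lemma nat_of_msbits K x : x < 2 ^ K -> nat_of_bits (msbit K x) K = x.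
Proof. by move=> lt_x; rewrite nat_of_msbits_prefix // subnn divn1. Qed.

Lemma leq_double_addb (a b : nat) (x y : bool) :
  (a.*2 + x <= b.*2 + y) = (a < b) || (a == b) && (x <= y).
Proof. by case: x; case: y; case: ltngtP; lia. Qed.

Lemma card_bigcup_le (I T : finType) (P : pred I) (F : I -> {set T}) :
  #|\bigcup_(i | P i) F i| <= \sum_(i | P i) #|F i|.
Proof.
elim/big_rec2: _ => [|i U k _ le_Uk]; first by rewrite cards0.
by apply: leq_trans (leq_card_setU _ _) _; rewrite leq_add2l.
Qed.

Lemma degreeE n (adj : rel 'I_n) v : degree adj v = #|[set w | adj v w]|.
Proof. by apply: eq_card => w; rewrite inE. Qed.

Lemma degree_le_max n (adj : rel 'I_n) v : degree adj v <= max_degree adj.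
Proof. exact: (@leq_bigmax _ (fun w => degree adj w) v). Qed.

Lemma card_closed_nbhdD1 n (adj : rel 'I_n) v u : irreflexive adj -> adj v u ->
  #|(v |: [set w | adj v w]) :\ u| = degree adj v.
Proof.
move=> adj_irr vu; rewrite degreeE; have := cardsD1 u (v |: [set w | adj v w]).
by rewrite cardsU1 !inE adj_irr vu orbT => /addnI->.
Qed.

Lemma max_degree_gt0 n (adj : rel 'I_n) v u : adj v u -> 0 < max_degree adj.
Proof.
move=> vu; apply: leq_trans (degree_le_max adj v).
by rewrite degreeE card_gt0; apply/set0Pn; exists u; rewrite inE.
Qed.

(** * Polynomial block designs *)

Section PolynomialDesign.
Import GRing.Theory.
Variable F : finFieldType.
Implicit Types p r : {poly F}.

Definition poly_graph p : {set F * F} := [set (a, p.[a]%R) | a : F].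

Lemma card_poly_graph p : #|poly_graph p| = #|F|.
Proof. by rewrite card_imset // => a b []. Qed.

Lemma card_poly_graphI p r : p != r -> #|poly_graph p :&: poly_graph r| < size (p - r)%R.
Proof.
move=> neq_pr.
have fst_inj : {in poly_graph p :&: poly_graph r &, injective fst}.
  by move=> _ _ /setIP[/imsetP[a _ ->] _] /setIP[/imsetP[b _ ->] _] /= ->.
rewrite -(card_in_imset fst_inj); apply: leq_ltn_trans (_ : #|[set a | root (p - r) a]| < _).
  apply/subset_leq_card/subsetP => _ /imsetP[_ /setIP[/imsetP[a _ ->] /imsetP[b _ [<- eq_pr]]] ->].
  by rewrite inE /root hornerD hornerN eq_pr subrr.
rewrite cardE max_poly_roots ?subr_eq0 ?enum_uniq //.
by apply/allP => a; rewrite mem_enum inE.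
Qed.

Definition code_poly (d x : nat) : {poly F} := \poly_(i < d) (msbit d x i)%:R%R.

Lemma size_code_poly d x : size (code_poly d x) <= d.
Proof. exact: size_poly. Qed.

Lemma code_poly_inj d x y : x < 2 ^ d -> y < 2 ^ d -> code_poly d x = code_poly d y -> x = y.
Proof.
move=> lt_x lt_y eq_xy; rewrite -(nat_of_msbits lt_x) -(nat_of_msbits lt_y).
apply: eq_nat_of_bits => i lt_id; move/(congr1 (coefp i)): eq_xy.
rewrite /= !coef_poly lt_id.
by case: msbit; case: msbit => // /eqP; rewrite ?oner_eq0 // eq_sym oner_eq0.
Qed.

End PolynomialDesign.

Lemma exp2_trunc_logS_le m : 2 ^ (trunc_log 2 m).+1 <= (maxn 1 m).*2.
Proof.
case: (posnP m) => [-> | m_gt0]; first by rewrite trunc_log0.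
by rewrite expnS (maxn_idPr m_gt0) mul2n leq_double trunc_logP.
Qed.

Lemma polynomial_block_design (qmin d : nat) :
  {q : nat & {inS : nat -> nat -> bool |
     [/\ qmin < q, q <= (maxn 1 qmin).*2,
      forall x, x < 2 ^ d -> #|[set s : 'I_(q * q) | inS x s]| = q &
      forall x y, x < 2 ^ d -> y < 2 ^ d -> x != y ->
        #|[set s : 'I_(q * q) | inS x s && inS y s]| < d]}}.
Proof.
pose q := 2 ^ (trunc_log 2 qmin).+1.
have [F _ card_F] := pPrimePowerField (isT : prime 2) (ltn0Sn (trunc_log 2 qmin)).
pose point (s : nat) : F * F := nth (0, 0)%R (enum {: F * F}) s.
exists q, (fun x s => point s \in poly_graph (code_poly F d x)).
have point_bij : bijective (fun s : 'I_(q * q) => point s).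
  apply: inj_card_bij; last by rewrite card_prod card_F card_ord.
  move=> s t /eqP; rewrite nth_uniq ?enum_uniq -?cardE ?card_prod ?card_F //.
  by move/eqP/val_inj.
have card_preim (A : {set F * F}) : #|[set s : 'I_(q * q) | point s \in A]| = #|A|.
  by rewrite -(on_card_preimset (onW_bij _ point_bij)); apply: eq_card => s; rewrite !inE.
split.
- exact: trunc_log_ltn.
- exact: exp2_trunc_logS_le.
- by move=> x _; rewrite card_preim card_poly_graph card_F.
- move=> x y lt_x lt_y neq_xy.
  have neq_code : code_poly F d x != code_poly F d y.
    by apply: contra neq_xy => /eqP/code_poly_inj-> //.
  set Gx := poly_graph (code_poly F d x); set Gy := poly_graph (code_poly F d y).
  have -> : [set s : 'I_(q * q) | point s \in Gx & point s \in Gy] =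
            [set s : 'I_(q * q) | point s \in Gx :&: Gy] by apply/setP => s; rewrite !inE.
  rewrite card_preim; apply: leq_trans (card_poly_graphI neq_code) _.
  by rewrite (leq_trans (size_polyD _ _)) // size_polyN geq_max !size_code_poly.
Qed.

(** * Bitwise maximum tournaments *)

Section Tournament.
Variables (V : finType) (C : pred V) (bits : V -> nat -> bool).

Definition bit_prefix i w := nat_of_bits (bits w) i.
Definition prefix_max i w := C w && [forall w', C w' ==> (bit_prefix i w' <= bit_prefix i w)].

Lemma prefix_max0 : prefix_max 0 =1 C.
Proof.
by move=> w; rewrite /prefix_max; case: (C w) => //; apply/forallP => w'; rewrite implybT.
Qed.

Lemma prefix_maxS i w : prefix_max i.+1 w =
  prefix_max i w && ~~ (~~ bits w i && [exists w', prefix_max i w' && bits w' i]).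
Proof.
have max_le w1 w2 : prefix_max i w1 -> C w2 -> bit_prefix i w2 <= bit_prefix i w1.
  by case/andP=> _ /forallP/(_ w2)/implyP; apply.
have leS w1 w2 : (bit_prefix i.+1 w2 <= bit_prefix i.+1 w1) =
    (bit_prefix i w2 < bit_prefix i w1)
    || (bit_prefix i w2 == bit_prefix i w1) && (bits w2 i <= bits w1 i).
  exact: leq_double_addb.
apply/idP/idP.
- case/andP=> C_w /forallP max_w.
  have max_iw : prefix_max i w.
    rewrite /prefix_max C_w; apply/forallP => w'; apply/implyP => /(implyP (max_w w')).
    by rewrite leS => /orP[/ltnW | /andP[/eqP-> _]].
  rewrite max_iw /=; apply/negP => /andP[/negbTE b_w /existsP[w' /andP[max_w' b_w']]].
  have C_w' : C w' by case/andP: max_w'.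
  have := implyP (max_w w') C_w'; rewrite leS b_w b_w' ltnNge max_le //=.
  by rewrite andbF.
- case/andP=> max_w /negP not_lost; have /andP[C_w _] := max_w.
  rewrite /prefix_max C_w; apply/forallP => w'; apply/implyP => C_w'.
  rewrite leS; case: ltngtP (max_le _ _ max_w C_w') => //= eq_w' _.
  case b_w: (bits w i); first by rewrite leq_b1.
  case b_w': (bits w' i) => //; case: not_lost; rewrite b_w; apply/existsP; exists w'.
  by rewrite b_w' andbT /prefix_max C_w' eq_w'; case/andP: max_w.
Qed.

Variables (K : nat) (alive : nat -> pred V).

Definition echo i := [exists w, alive i w && bits w i].

Hypothesis alive0 : forall w, alive 0 w = C w.
Hypothesis aliveS : forall i w, i < K -> alive i.+1 w = alive i w && ~~ (~~ bits w i && echo i).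

Lemma alive_prefix_max i : i <= K -> alive i =1 prefix_max i.
Proof.
elim: i => [_ w | i IH lt_iK w]; first by rewrite alive0 prefix_max0.
have {}IH := IH (ltnW lt_iK); rewrite aliveS // prefix_maxS IH.
by congr (_ && ~~ (_ && _)); apply: eq_existsb => w'; rewrite IH.
Qed.

Lemma nat_of_echo i w : i <= K -> alive i w -> nat_of_bits echo i = bit_prefix i w.
Proof.
elim: i w => // i IH w lt_iK; rewrite aliveS // => /andP[alive_w not_lost].
rewrite nat_of_bitsS /bit_prefix nat_of_bitsS -/(bit_prefix i w) (IH w (ltnW lt_iK) alive_w).
congr (_ + nat_of_bool _); case: (boolP (bits w i)) => [b_w | not_bw].
  by apply/existsP; exists w; rewrite alive_w.
by move: not_lost; rewrite not_bw => /negbTE.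
Qed.

End Tournament.

(** * The protocol *)

Section Protocol.
Variables (W B L : nat) (inS : nat -> nat -> bool).

Definition block_len := W.*2 + B.
Definition slot s j := s * block_len + j.

(* Listeners recognise their neighbours' IDs as the keys of their input map. *)
Definition owner (x : nat) (inp : msgmap) (s : nat) : option nat :=
  if inS x s then None else
  if [pick z : 'I_(2 ^ W) | (inp z != None) && inS z s] is Some z then
    if [forall z' : 'I_(2 ^ W), (inp z' != None) && inS z' s ==> (z' == z)]
    then Some (z : nat) else None
  else None.

Fixpoint survives (x : nat) (f : nat -> bool) (s i : nat) : bool :=
  if i is i'.+1 then survives x f s i' && ~~ (~~ msbit W x i' && f (slot s i'.*2.+1))
  else true.

Lemma survivesS x f s i :
  survives x f s i.+1 = survives x f s i && ~~ (~~ msbit W x i && f (slot s i.*2.+1)).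
Proof. by []. Qed.

Definition won x inp f s y := (owner x inp s == Some y) && survives x f s W.
Definition served x inp f s y := has (fun s' => won x inp f s' y) (iota 0 s).
Definition contends x inp f s :=
  if owner x inp s is Some y then ~~ served x inp f s y else false.

Definition winner_id (f : nat -> bool) s := nat_of_bits (fun i => f (slot s i.*2)) W.
Definition reply (inp : msgmap) f s := if inp (winner_id f s) is Some m then m else 0.
Definition received (f : nat -> bool) s := nat_of_bits (fun r => f (slot s (W.*2 + r))) B.

(* Round [j] of block [s]: for [j < 2W], at [j = 2i] the surviving contenders beep bit [i]
   of their ID and at [j = 2i + 1] senders echo what they heard at [2i]; in the last [B]
   rounds senders beep the message addressed to the tournament winner. *)
Definition beeps x inp (f : nat -> bool) t :=
  let s := t %/ block_len in let j := t %% block_len in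
  if inS x s then
    if j < W.*2 then odd j && f t.-1 else msbit B (reply inp f s) (j - W.*2)
  else (j < W.*2) && ~~ odd j && contends x inp f s && survives x f s j./2 && msbit W x j./2.

Definition decode x inp (f : nat -> bool) : msgmap := fun y =>
  if inp y is Some _ then
    let s := find (fun s => won x inp f s y) (iota 0 L) in
    if s < L then Some (received f s) else None
  else None.

Definition proto := BeepProtocol (fun x inp h => beeps x inp (nth false h) (size h))
                                 (fun x inp h => decode x inp (nth false h)).

Lemma slot_divmod s j : j < block_len -> slot s j %/ block_len = s /\ slot s j %% block_len = j.
Proof.
move=> lt_j; have len_gt0 : 0 < block_len by apply: leq_ltn_trans lt_j.
by rewrite /slot divnMDl // modnMDl divn_small // modn_small // addn0.
Qed.

(* The protocol reads its history through [nth false], which agrees with the feedback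
   actually heard only on past rounds; no decision looks further. *)
Section Causality.
Variables (f g : nat -> bool) (t : nat).
Hypothesis eq_fg : forall k, k < t -> f k = g k.

Lemma survives_ext x s i : slot s i.*2 <= t -> survives x f s i = survives x g s i.
Proof.
elim: i => [//| i IH le_t]; rewrite !survivesS IH ?eq_fg //; move: le_t; rewrite /slot; lia.
Qed.

Lemma won_ext x inp s y : s.+1 * block_len <= t -> won x inp f s y = won x inp g s y.
Proof.
by move=> le_t; rewrite /won survives_ext // /slot; move: le_t; rewrite mulSn /block_len; lia.
Qed.

Lemma served_ext x inp s y : s * block_len <= t -> served x inp f s y = served x inp g s y.
Proof.
move=> le_t; apply: eq_in_has => s'; rewrite mem_iota => /andP[_ lt_s'].
by apply: won_ext; apply: leq_trans le_t; rewrite leq_mul2r lt_s' orbT.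
Qed.

Lemma contends_ext x inp s : s * block_len <= t -> contends x inp f s = contends x inp g s.
Proof. by move=> le_t; rewrite /contends; case: owner => // y; rewrite served_ext. Qed.

Lemma reply_ext inp s : slot s W.*2 <= t -> reply inp f s = reply inp g s.
Proof.
move=> le_t; rewrite /reply /winner_id (@eq_nat_of_bits _ (fun i => g (slot s i.*2))) //.
by move=> i lt_iW; apply: eq_fg; move: le_t; rewrite /slot; lia.
Qed.

Lemma received_ext s : s.+1 * block_len <= t -> received f s = received g s.
Proof.
move=> le_t; apply: eq_nat_of_bits => r lt_rB; apply: eq_fg.
by move: le_t; rewrite /slot mulSn /block_len; lia.
Qed.

Lemma beeps_ext x inp : 0 < block_len -> beeps x inp f t = beeps x inp g t.
Proof.
move=> len_gt0; rewrite /beeps.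
have def_t : t = slot (t %/ block_len) (t %% block_len) by rewrite /slot -divn_eq.
have lt_j : t %% block_len < block_len by rewrite ltn_mod.
set s := t %/ block_len in def_t *; set j := t %% block_len in def_t lt_j *.
case: inS; first case: ifP => lt_jW.
- by case: (boolP (odd j)) => //= odd_j; rewrite eq_fg // def_t /slot; case: (j) odd_j => //=; lia.
- by rewrite reply_ext // def_t /slot; lia.
- rewrite contends_ext ?survives_ext // def_t /slot; last by lia.
  by have := odd_double_half j; lia.
Qed.

Lemma decode_ext x inp : L * block_len <= t -> decode x inp f =1 decode x inp g.
Proof.
move=> le_t y; rewrite /decode; case: (inp y) => // _.
have won_fg s : s < L -> won x inp f s y = won x inp g s y.
  by move=> lt_sL; apply: won_ext; apply: leq_trans le_t; rewrite leq_mul2r lt_sL orbT.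
rewrite (eq_in_find (a2 := fun s => won x inp g s y)); last first.
  by move=> s; rewrite mem_iota => /andP[_ /won_fg].
case: ifP => // lt_L; rewrite received_ext //; apply: leq_trans le_t.
by rewrite leq_mul2r lt_L orbT.
Qed.

End Causality.

Section Correctness.
Variables (n : nat) (adj : rel 'I_n) (id : 'I_n -> nat) (m : 'I_n -> 'I_n -> nat).
Hypotheses (W_gt0 : 0 < W) (adj_sym : symmetric adj) (adj_irr : irreflexive adj)
  (id_inj : injective id) (id_lt : forall v, id v < 2 ^ W)
  (m_lt : forall u v, adj u v -> m u v < 2 ^ B).

Local Notation inp := (outbox adj id m).
Local Notation history := (history adj id inp proto).

Definition heard v t := nth false (history t.+1 v) t.
Definition beeped t v := beeps (id v) (inp v) (heard v) t.

Local Notation owner_of v s := (owner (id v) (inp v) s).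
Local Notation contending v s := (contends (id v) (inp v) (heard v) s).
Local Notation surviving v s i := (survives (id v) (heard v) s i).

Lemma block_len_gt0 : 0 < block_len.
Proof. by rewrite addn_gt0 double_gt0 W_gt0. Qed.

Lemma size_history t v : size (history t v) = t.
Proof. by elim: t v => //= t IH v; rewrite size_rcons IH. Qed.

Lemma nth_history t v i : i < t -> nth false (history t v) i = heard v i.
Proof.
elim: t => // t IH; rewrite ltnS leq_eqVlt => /orP[/eqP-> // | lt_it].
by rewrite /= nth_rcons size_history lt_it IH.
Qed.

Lemma heard_step t v : heard v t = ~~ beeped t v && [exists u, adj v u && beeped t u].
Proof.
have beepedE w : beeps (id w) (inp w) (nth false (history t w)) t = beeped t w.
  exact/beeps_ext/block_len_gt0/nth_history.
rewrite /heard /= nth_rcons size_history ltnn eqxx /= beepedE.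
by congr (_ && _); apply: eq_existsb => w; rewrite size_history beepedE.
Qed.

Lemma output_decode t v : L * block_len <= t ->
  output adj id inp proto t v =1 decode (id v) (inp v) (heard v).
Proof. by move=> le_t; apply: (decode_ext (t := t)) le_t => k /nth_history. Qed.

Lemma beeped_sender s j w : j < block_len -> inS (id w) s ->
  beeped (slot s j) w = if j < W.*2 then odd j && heard w (slot s j).-1
                        else msbit B (reply (inp w) (heard w) s) (j - W.*2).
Proof.
by move=> lt_j in_w; rewrite /beeped /beeps; have [-> ->] := slot_divmod s lt_j; rewrite in_w.
Qed.

Lemma beeped_listener s j w : j < block_len -> ~~ inS (id w) s ->
  beeped (slot s j) w = (j < W.*2) && ~~ odd j && contending w s
                        && surviving w s j./2 && msbit W (id w) j./2.
Proof.
move=> lt_j out_w; rewrite /beeped /beeps; have [-> ->] := slot_divmod s lt_j.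
by rewrite (negbTE out_w).
Qed.

Lemma outbox_neq_None v z : (inp v z != None) = [exists w, adj v w && (id w == z)].
Proof.
rewrite /outbox; case: pickP => [w vw | none_w] /=; first by apply/esym/existsP; exists w.
by apply/esym/negbTE/existsP => -[w]; rewrite none_w.
Qed.

Lemma outbox_id v w : adj v w -> inp v (id w) = Some (m v w).
Proof.
move=> vw; rewrite /outbox; case: pickP => [w' /andP[_ /eqP/id_inj->] // | none_w].
by have := none_w w; rewrite vw eqxx.
Qed.

Lemma inbox_id v w : adj v w -> inbox adj id m v (id w) = Some (m w v).
Proof.
move=> vw; rewrite /inbox; case: pickP => [w' /andP[_ /eqP/id_inj->] // | none_w].
by have := none_w w; rewrite vw eqxx.
Qed.

Lemma inbox_None v z : (forall w, adj v w -> id w != z) -> inbox adj id m v z = None.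
Proof.
move=> not_nb; rewrite /inbox; case: pickP => // w /andP[vw /eqP eq_z].
by have := not_nb w vw; rewrite eq_z eqxx.
Qed.

Lemma owner_someP v s y : owner_of v s = Some y ->
  [/\ ~~ inS (id v) s, exists2 u, adj v u & id u = y, inS y s &
      forall w, adj v w -> inS (id w) s -> id w = y].
Proof.
rewrite /owner; case: ifP => // out_v.
case: pickP => // z /andP[nb_z in_z]; case: ifP => // /forallP uniq_z [<-].
split => //; first by move: nb_z; rewrite outbox_neq_None => /existsP[u /andP[vu /eqP]]; exists u.
move=> w vw in_w; have := uniq_z (Ordinal (id_lt w)); rewrite /= in_w andbT outbox_neq_None.
have -> // : [exists w', adj v w' && (id w' == id w)] by apply/existsP; exists w; rewrite vw eqxx.
by move=> /eqP/(congr1 val).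
Qed.

Lemma owner_unique_sender v u s : ~~ inS (id v) s -> adj v u -> inS (id u) s ->
  (forall w, adj v w -> inS (id w) s -> w = u) -> owner_of v s = Some (id u).
Proof.
move=> out_v vu in_u uniq_u; rewrite /owner (negbTE out_v).
have sender_u (z : 'I_(2 ^ W)) : (inp v z != None) && inS z s -> z = id u :> nat.
  case/andP; rewrite outbox_neq_None => /existsP[w /andP[vw /eqP eq_z]] in_z.
  by rewrite -eq_z (uniq_u w vw) // eq_z.
case: pickP => [z sz | no_sender]; last first.
  have := no_sender (Ordinal (id_lt u)); rewrite /= in_u andbT outbox_neq_None.
  by have -> : [exists w, adj v w && (id w == id u)] by apply/existsP; exists u; rewrite vu eqxx.
rewrite (sender_u z sz); case: ifP => // /negP[]; apply/forallP => z'; apply/implyP => sz'.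
by apply/eqP/ord_inj; rewrite (sender_u z sz) (sender_u z' sz').
Qed.

Lemma contending_owner w u s : contending w s -> adj u w -> inS (id u) s ->
  owner_of w s = Some (id u).
Proof.
rewrite /contends; case def_y: owner => [y|] // _ uw in_u.
by have [_ _ _ ->] := owner_someP def_y; rewrite // adj_sym.
Qed.

Lemma slot_pred s j : (slot s j.+1).-1 = slot s j.
Proof. by rewrite /slot addnS. Qed.

Lemma heard_sender_round s i u : i < W -> inS (id u) s ->
  heard u (slot s i.*2) =
  [exists w, adj u w && contending w s && surviving w s i && msbit W (id w) i].
Proof.
move=> lt_iW in_u.
have lt_j : i.*2 < block_len by apply: leq_trans (leq_addr _ _); rewrite ltn_double.
rewrite heard_step beeped_sender // ltn_double lt_iW odd_double /=.
apply: eq_existsb => w; case: (boolP (inS (id w) s)) => [in_w | out_w].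
  by rewrite beeped_sender // ltn_double lt_iW odd_double /contends /owner in_w !andbF.
by rewrite beeped_listener // ltn_double lt_iW odd_double doubleK /= !andbA.
Qed.

Lemma heard_echo s i v u : i < W -> owner_of v s = Some (id u) -> adj v u ->
  heard v (slot s i.*2.+1) = heard u (slot s i.*2).
Proof.
move=> lt_iW own_v vu; have [out_v _ in_u uniq_u] := owner_someP own_v.
have lt_jW : i.*2.+1 < W.*2 by rewrite -doubleS leq_double.
have lt_j : i.*2.+1 < block_len by apply: leq_trans lt_jW (leq_addr _ _).
rewrite heard_step beeped_listener // lt_jW /= odd_double /=.
apply/existsP/idP => [[w /andP[vw]] | heard_u].
- case: (boolP (inS (id w) s)) => [in_w | out_w].
    by rewrite beeped_sender // lt_jW /= odd_double slot_pred -(id_inj (uniq_u w vw in_w)).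
  by rewrite beeped_listener // lt_jW /= odd_double.
- by exists u; rewrite vu beeped_sender // lt_jW /= odd_double slot_pred.
Qed.

Lemma heard_reply s r v u : r < B -> owner_of v s = Some (id u) -> adj v u ->
  heard v (slot s (W.*2 + r)) = msbit B (reply (inp u) (heard u) s) r.
Proof.
move=> lt_rB own_v vu; have [out_v _ in_u uniq_u] := owner_someP own_v.
have lt_j : W.*2 + r < block_len by rewrite ltn_add2l.
have ge_jW : (W.*2 + r < W.*2) = false by rewrite ltnNge leq_addr.
rewrite heard_step beeped_listener // ge_jW /=.
apply/existsP/idP => [[w /andP[vw]] | reply_u].
- case: (boolP (inS (id w) s)) => [in_w | out_w]; last by rewrite beeped_listener // ge_jW.
  by rewrite beeped_sender // ge_jW addKn -(id_inj (uniq_u w vw in_w)).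
- by exists u; rewrite vu beeped_sender // ge_jW addKn.
Qed.

Section SenderTournament.
Variables (s : nat) (u : 'I_n).
Hypothesis in_u : inS (id u) s.

Let contender w := adj u w && contending w s.
Let alive i w := contender w && surviving w s i.
Let id_bits w := msbit W (id w).

Lemma heard_sender_echo i : i < W -> heard u (slot s i.*2) = echo id_bits alive i.
Proof. by move=> lt_iW; rewrite heard_sender_round. Qed.

Lemma alive_step i w : i < W ->
  alive i.+1 w = alive i w && ~~ (~~ id_bits w i && echo id_bits alive i).
Proof.
move=> lt_iW; rewrite /alive survivesS andbA.
case cont_w: (contender w); last by rewrite !andFb.
have /andP[uw c_w] := cont_w; have wu : adj w u by rewrite adj_sym.
by rewrite (heard_echo lt_iW (contending_owner c_w uw in_u) wu) heard_sender_echo.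
Qed.

Lemma bit_prefix_id_bits w : bit_prefix id_bits W w = id w.
Proof. exact: nat_of_msbits. Qed.

Lemma max_contender_survives w : contender w ->
  (forall w', contender w' -> id w' <= id w) -> surviving w s W.
Proof.
move=> cont_w max_w.
have := alive_prefix_max (alive := alive) (fun w => andbT _) alive_step (leqnn W) w.
rewrite /alive /prefix_max cont_w !andTb => ->; apply/forallP => w'; apply/implyP => /max_w.
by rewrite !bit_prefix_id_bits.
Qed.

Lemma winner_id_survivor w : contender w -> surviving w s W -> winner_id (heard u) s = id w.
Proof.
move=> cont_w surv_w; rewrite -bit_prefix_id_bits -(nat_of_echo alive_step (leqnn W)).
  by apply: eq_nat_of_bits => i /heard_sender_echo.
by rewrite /alive cont_w.
Qed.

End SenderTournament.

Lemma received_reply s u v : inS (id u) s -> adj u v -> contending v s -> surviving v s W ->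
  received (heard v) s = m u v.
Proof.
move=> in_u uv cont_v surv_v; have vu : adj v u by rewrite adj_sym.
have own_v := contending_owner cont_v uv in_u.
have winner_v : winner_id (heard u) s = id v.
  by apply: winner_id_survivor surv_v; rewrite // uv cont_v.
rewrite -[m u v](nat_of_msbits (m_lt uv)); apply: eq_nat_of_bits => r lt_rB.
by rewrite (heard_reply lt_rB own_v vu) /reply winner_v outbox_id.
Qed.

Lemma winner_stops_contending w u s1 s2 : s1 < s2 -> adj u w ->
  inS (id u) s1 -> inS (id u) s2 -> contending w s1 -> surviving w s1 W -> ~~ contending w s2.
Proof.
move=> lt_s12 uw in_u1 in_u2 cont1 surv1; apply/negP => cont2; move: (cont2).
rewrite /contends (contending_owner cont2 uw in_u2) /served => /hasPn/(_ s1).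
by rewrite mem_iota lt_s12 /won (contending_owner cont1 uw in_u1) eqxx surv1 => /(_ isT).
Qed.

Definition block_winner u v s : 'I_n := [arg max_(w > v | adj u w && contending w s) id w].

Lemma block_winnerP u v s : inS (id u) s -> adj u v -> contending v s ->
  let w := block_winner u v s in [/\ adj u w, contending w s & surviving w s W].
Proof.
move=> in_u uv cont_v; rewrite /block_winner; case: arg_maxnP => [|w cont_w max_w].
  by rewrite uv.
have [uw c_w] := andP cont_w; split => //.
by apply: (max_contender_survives in_u cont_w) => w' /max_w.
Qed.

Lemma block_winner_neq u v s1 s2 : s1 < s2 -> inS (id u) s1 -> inS (id u) s2 -> adj u v ->
  contending v s1 -> contending v s2 -> block_winner u v s1 != block_winner u v s2.
Proof.
move=> lt_s in_u1 in_u2 uv c1 c2; have [uw c_w1 surv_w1] := block_winnerP in_u1 uv c1.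
have [_ c_w2 _] := block_winnerP in_u2 uv c2.
by apply: contraNneq (winner_stops_contending lt_s uw in_u1 in_u2 c_w1 surv_w1) => ->.
Qed.

Lemma served_within v u : adj v u ->
  max_degree adj <= #|[set s : 'I_L | owner_of v s == Some (id u)]| ->
  has (fun s => won (id v) (inp v) (heard v) s (id u)) (iota 0 L).
Proof.
move=> vu; set U := [set s : 'I_L | _] => le_U; apply/negPn/negP => never.
have uv : adj u v by rewrite adj_sym.
have own_U (s : 'I_L) : s \in U -> owner_of v s = Some (id u) by rewrite inE => /eqP.
have in_U (s : 'I_L) : s \in U -> inS (id u) s by move/own_U/owner_someP => [].
have cont_U (s : 'I_L) : s \in U -> contending v s.
  move=> sU; rewrite /contends own_U //; apply: contra never => /hasP[s' s's won_s'].
  apply/hasP; exists s' => //; move: s's; rewrite !mem_iota !add0n => /ltn_trans; exact.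
have winner_neq_v (s : 'I_L) : s \in U -> block_winner u v s != v.
  move=> sU; have [_ _ surv_w] := block_winnerP (in_U s sU) uv (cont_U s sU).
  apply: contraNneq never => eq_wv; apply/hasP; exists (val s); first by rewrite mem_iota ltn_ord.
  by rewrite /won own_U // eqxx -eq_wv.
pose winner (s : 'I_L) := block_winner u v s.
have winner_inj : {in U &, injective winner}.
  move=> s1 s2 sU1 sU2; rewrite /winner.
  case: (ltngtP (val s1) (val s2)) => [lt_s | lt_s | /val_inj //] eq_w.
    have := block_winner_neq lt_s (in_U _ sU1) (in_U _ sU2) uv (cont_U _ sU1) (cont_U _ sU2).
    by rewrite eq_w eqxx.
  have := block_winner_neq lt_s (in_U _ sU2) (in_U _ sU1) uv (cont_U _ sU2) (cont_U _ sU1).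
  by rewrite eq_w eqxx.
have : #|winner @: U| < #|[set w | adj u w]|.
  apply: proper_card; apply/properP; split.
    apply/subsetP => _ /imsetP[s sU ->]; rewrite inE.
    by have [] := block_winnerP (in_U s sU) uv (cont_U s sU).
  exists v; first by rewrite inE.
  apply/imsetP => -[s sU]; rewrite /winner => eq_v.
  by have := winner_neq_v s sU; rewrite -eq_v eqxx.
rewrite card_in_imset // -degreeE => lt_U.
by have := leq_trans lt_U (degree_le_max adj u); rewrite ltnNge le_U.
Qed.

Lemma decode_correct v :
  (forall u, adj v u -> max_degree adj <= #|[set s : 'I_L | owner_of v s == Some (id u)]|) ->
  output adj id inp proto (L * block_len) v =1 inbox adj id m v.
Proof.
move=> owned x; rewrite output_decode // /decode.
have [/existsP[u /andP[vu /eqP<-]] | no_nb] := boolP [exists u, adj v u && (id u == x)].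
- rewrite outbox_id // inbox_id //; have won_some := served_within vu (owned u vu).
  set s := find _ _; have lt_sL : s < L by rewrite -[L in _ < L](size_iota 0 L) -has_find.
  have /andP[/eqP own_v surv_v] : won (id v) (inp v) (heard v) s (id u).
    by have := nth_find 0 won_some; rewrite nth_iota.
  have not_served : ~~ served (id v) (inp v) (heard v) s (id u).
    apply/hasP => -[s' /[!mem_iota] /andP[_ lt_s's] won_s'].
    by have := before_find 0 lt_s's; rewrite nth_iota ?won_s' // (ltn_trans lt_s's).
  have [_ _ in_u _] := owner_someP own_v.
  have uv : adj u v by rewrite adj_sym.
  by rewrite lt_sL (received_reply in_u uv _ surv_v) // /contends own_v.
- have -> : inp v x = None by apply/eqP; rewrite -[_ == _]negbK outbox_neq_None.
  rewrite inbox_None // => w vw; apply: contraNneq no_nb => <-.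
  by apply/existsP; exists w; rewrite vw eqxx.
Qed.

Lemma owned_blocks_gt v u (q : nat) :
  (forall x, x < 2 ^ W -> q <= #|[set s : 'I_L | inS x s]|) ->
  (forall x y, x < 2 ^ W -> y < 2 ^ W -> x != y ->
     #|[set s : 'I_L | inS x s && inS y s]| < W) ->
  max_degree adj * W < q -> adj v u ->
  max_degree adj < #|[set s : 'I_L | owner_of v s == Some (id u)]|.
Proof.
move=> card_S meet_S lt_q vu.
set D := max_degree adj; set Owned := [set s : 'I_L | _].
pose Q := (v |: [set w | adj v w]) :\ u.
pose meet w := [set s : 'I_L | inS (id u) s && inS (id w) s].
have neq_vu : v != u by apply: contraTneq vu => ->; rewrite adj_irr.
have cover : [set s : 'I_L | inS (id u) s] \subset Owned :|: \bigcup_(w in Q) meet w.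
  apply/subsetP => s; rewrite !inE => in_u.
  have [in_v | out_v] := boolP (inS (id v) s).
    by apply/orP; right; apply/bigcupP; exists v; rewrite !inE ?eqxx ?neq_vu ?in_u.
  have [/existsP[w /and3P[vw neq_wu in_w]] | alone] :=
    boolP [exists w, [&& adj v w, w != u & inS (id w) s]].
    by apply/orP; right; apply/bigcupP; exists w; rewrite !inE ?vw ?neq_wu ?orbT ?in_u.
  apply/orP; left; rewrite (owner_unique_sender out_v vu in_u) // => w vw in_w.
  by apply/eqP; apply: contraNT alone => neq_wu; apply/existsP; exists w; rewrite vw neq_wu.
have card_meet w : w \in Q -> #|meet w| <= W.-1.
  rewrite -ltnS prednK // => /setD1P[neq_wu _]; apply: meet_S; rewrite ?id_lt //.
  by apply: contra neq_wu => /eqP/id_inj->.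
have le_q : q <= #|Owned| + D * W.-1.
  apply: leq_trans (card_S _ (id_lt u)) _; apply: leq_trans (subset_leq_card cover) _.
  apply: leq_trans (leq_card_setU _ _) _; rewrite leq_add2l.
  apply: leq_trans (card_bigcup_le _ _) _; apply: leq_trans (leq_sum _ card_meet) _.
  by rewrite sum_nat_const leq_mul2r card_closed_nbhdD1 // degree_le_max orbT.
have : D * W.-1 + D = D * W by rewrite -mulnSr prednK.
lia.
Qed.

End Correctness.

End Protocol.

Lemma id_lt_exp2 c n x : 0 < c -> x <= n ^ c -> x < 2 ^ (c * lg n).
Proof.
move=> c_gt0 le_x; apply: leq_ltn_trans le_x _.
by rewrite mulnC expnM ltn_exp2r // trunc_log_ltn.
Qed.

Lemma schedule_length_le c b n D q : 0 < c -> q <= (maxn 1 (D * (c * lg n))).*2 ->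
  (if D == 0 then 0 else q * q) * block_len (c * lg n) (b * lg n)
    <= 4 * c ^ 2 * (c.*2 + b) * D ^ 2 * lg n ^ 3 * lg D.
Proof.
move=> c_gt0; case: (posnP D) => [-> // | D_gt0]; rewrite (maxn_idPr _) ?muln_gt0 ?D_gt0 ?c_gt0 //.
move=> le_q; apply: leq_trans (leq_pmulr _ (ltn0Sn _)).
apply: leq_trans (leq_mul (leq_mul le_q le_q) (leqnn _)) _.
rewrite /block_len -!mul2n; apply: eq_leq; ring.
Qed.

Theorem theorem6 (c b : nat) (hc : 1 <= c) :
  exists (C k : nat) (T : nat -> nat -> nat) (P : nat -> nat -> beep_protocol),
    forall n Delta : nat,
      T n Delta <= C * Delta ^ 2 * (lg n) ^ k * lg Delta /\
      forall (adj : rel 'I_n) (id : 'I_n -> nat) (m : 'I_n -> 'I_n -> nat),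
        symmetric adj -> irreflexive adj ->
        max_degree adj = Delta ->
        injective id -> (forall v, 1 <= id v <= n ^ c) ->
        (forall u v, adj u v -> m u v < 2 ^ (b * lg n)) ->
        forall v : 'I_n,
          output adj id (outbox adj id m) (P n Delta) (T n Delta) v
          =1 inbox adj id m v.
Proof.
pose W n := c * lg n; pose design n D := polynomial_block_design (D * W n) (W n).
pose q n D := projT1 (design n D).
(* Without edges nothing is sent, and the bound [C * 0 ^ 2 * ...] forces an empty schedule. *)
pose L n D := if D == 0 then 0 else q n D * q n D.
exists (4 * c ^ 2 * (c.*2 + b)), 3, (fun n D => L n D * block_len (W n) (b * lg n)),
  (fun n D => proto (W n) (b * lg n) (L n D) (sval (projT2 (design n D)))).
move=> n D; have [lt_q le_q card_S meet_S] := svalP (projT2 (design n D)).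
split; first exact: (schedule_length_le b hc le_q).
move=> adj id m adj_sym adj_irr max_D id_inj id_range m_lt v.
have W_gt0 : 0 < W n by rewrite muln_gt0 hc.
have id_lt w : id w < 2 ^ W n by case/andP: (id_range w) => _; apply: id_lt_exp2.
apply: decode_correct => // u vu; apply: ltnW.
have D_gt0 : 0 < D by rewrite -max_D; apply: max_degree_gt0 vu.
have lt_qD : max_degree adj * W n < q n D by rewrite max_D.
rewrite /L gtn_eqF //; apply: owned_blocks_gt _ meet_S lt_qD vu => //.
by move=> x /card_S ->.
Qed.
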